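(* Let $d\ge1$, let $\mathcal{F}=\{1,\dots,d\}$ be partitioned into sets $\mathcal{D}$ (desirable features) and $\mathcal{U}$ (undesirable features), let $c\in\mathbb{R}^d$ with $c_f>0$ for all $f$, let $\mathbb{C}\in\mathbb{R}^{d\times d}$ be the contribution matrix of a causal graph and $h_0\in\mathbb{R}^d$ a classifier with $\mathbb{C}h_0\ge0$ componentwise, and let $\alpha>0$. Consider the agent's problem $$\min_{e\in\mathbb{R}^d,\ e\ge 0}\ c^\top e\quad\text{s.t.}\quad (\mathbb{C}h_0)^\top e\ge\alpha .$$ If there exists $f^\star\in\mathcal{D}$ such that $$\max_{f\in\mathcal{U}}\frac{(\mathbb{C}h_0)_f}{c_f}<\frac{(\mathbb{C}h_0)_{f^\star}}{c_{f^\star}},$$ then every optimal solution (best response) of this problem is a $\beta$-desirable effort profile for every $\beta\in(0,1]$.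
   Context: A causal graph is a weighted directed acyclic graph on $\mathcal{F}$ with adjacency matrix $A$ ($A_{ij}$ the weight of edge $i\to j$, $0$ if absent); its contribution matrix is $\mathbb{C}=\sum_{k=0}^{d}A^k$. The maximum over an empty set is $-\infty$. For $\beta\in(0,1]$, an effort profile $e\in\mathbb{R}^d$ is $\beta$-desirable if $\|e_{\mathcal{D}}\|_2\ge\beta\|e\|_2$, where $e_{\mathcal{D}}$ is the vector of coordinates of $e$ indexed by $\mathcal{D}$. *)

From HB Require Import structures.
From mathcomp Require Import all_boot all_order all_algebra.
From mathcomp Require Import reals.
Set Implicit Arguments. Unset Strict Implicit. Unset Printing Implicit Defensive.
Import Order.TTheory GRing.Theory Num.Theory.
Local Open Scope ring_scope.

Section Defs.
Variable R : realType.

Definition edge_rel (d : nat) (A : 'M[R]_d) : rel 'I_d := fun i j => A i j != 0.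

Definition is_causal_graph (d : nat) (A : 'M[R]_d) : Prop :=
  forall i j : 'I_d, edge_rel A i j -> ~~ connect (edge_rel A) j i.

Definition contribution (d : nat) (A : 'M[R]_d) : 'M[R]_d :=
  \sum_(k < d.+1) A ^+ k.

Definition feasible (d : nat) (w : 'cV[R]_d) (alpha : R) (e : 'cV[R]_d) : Prop :=
  (forall f, 0 <= e f 0) /\ \sum_(f < d) w f 0 * e f 0 >= alpha.

Definition cost (d : nat) (c e : 'cV[R]_d) : R := \sum_(f < d) c f 0 * e f 0.

Definition best_response (d : nat) (c w : 'cV[R]_d) (alpha : R) (e : 'cV[R]_d) : Prop :=
  feasible w alpha e /\ forall e', feasible w alpha e' -> cost c e <= cost c e'.

Definition norm2_on (d : nat) (S : {set 'I_d}) (e : 'cV[R]_d) : R :=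
  Num.sqrt (\sum_(f in S) e f 0 ^+ 2).

Definition norm2 (d : nat) (e : 'cV[R]_d) : R := Num.sqrt (\sum_(f < d) e f 0 ^+ 2).

Definition beta_desirable (d : nat) (D : {set 'I_d}) (beta : R) (e : 'cV[R]_d) : Prop :=
  norm2_on D e >= beta * norm2 e.

End Defs.

(* Exchange argument: if some effort sits on an undesirable feature g, moving it to the
   desirable feature f* at the rate w_g / w_f* keeps (C h0)^T e unchanged and, by the
   strict ratio condition, strictly lowers the cost.  Hence a best response vanishes on
   U, so e_D has the same norm as e and beta * |e| <= |e_D| for every beta <= 1. *)
From HB Require Import structures.
From mathcomp Require Import all_boot all_order all_algebra.
From mathcomp Require Import reals.
Import Order.TTheory GRing.Theory Num.Theory.
Local Open Scope ring_scope.

Section Cost.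
Variables (R : realType) (d : nat).
Implicit Types (a e : 'cV[R]_d) (k : R).

Lemma costD a e1 e2 : cost a (e1 + e2) = cost a e1 + cost a e2.
Proof. by rewrite /cost -big_split; apply: eq_bigr => f _; rewrite mxE mulrDr. Qed.

Lemma costZ a k e : cost a (k *: e) = k * cost a e.
Proof. by rewrite /cost mulr_sumr; apply: eq_bigr => f _; rewrite mxE mulrCA. Qed.

Lemma costN a e : cost a (- e) = - cost a e.
Proof. by rewrite -scaleN1r costZ mulN1r. Qed.

Lemma cost_delta a (s : 'I_d) : cost a (delta_mx s 0) = a s 0.
Proof.
rewrite /cost (bigD1 s) //= mxE !eqxx mulr1 big1 ?addr0 // => f /negbTE fs.
by rewrite mxE fs mulr0.
Qed.

Lemma cost_exchange a e (s g : 'I_d) k l :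
  cost a (e + k *: delta_mx s 0 - l *: delta_mx g 0) = cost a e + k * a s 0 - l * a g 0.
Proof. by rewrite costD costN !costD !costZ !cost_delta. Qed.

End Cost.

Section BestResponse.
Variables (R : realType) (d : nat) (c w : 'cV[R]_d) (alpha : R).
Hypothesis c_gt0 : forall f, 0 < c f 0.

Lemma best_response_dominated_eq0 (e : 'cV[R]_d) (g s : 'I_d) :
  best_response c w alpha e -> 0 <= w g 0 ->
  w g 0 / c g 0 < w s 0 / c s 0 -> e g 0 = 0.
Proof.
move=> [[e_ge0 e_feas] e_opt] wg_ge0 ratio_lt.
have ws_gt0 : 0 < w s 0.
  have : 0 < w s 0 / c s 0 by apply: le_lt_trans ratio_lt; rewrite divr_ge0 // ltW.
  by rewrite pmulr_lgt0 // invr_gt0.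
have gs : g != s by apply: contraTneq ratio_lt => ->; rewrite ltxx.
apply/eqP; rewrite eq_le e_ge0 andbT leNgt; apply/negP => eg_gt0.
pose t := e g 0 * w g 0 / w s 0.
have t_ge0 : 0 <= t by rewrite /t divr_ge0 ?mulr_ge0 // ltW.
pose e' := e + t *: delta_mx s 0 - e g 0 *: delta_mx g 0.
have e'_feas : feasible w alpha e'.
  split=> [f|]; last by rewrite -/(cost w e') cost_exchange /t divfK ?gt_eqF // addrK.
  rewrite !mxE; have [->|_] := eqVneq f g.
    by rewrite (negbTE gs) eqxx mulr0 addr0 mulr1 subrr.
  by rewrite mulr0 subr0 addr_ge0 // mulr_ge0.
have cheaper : cost c e' < cost c e.
  rewrite cost_exchange -addrA gtrDl subr_lt0 /t -!mulrA ltr_pM2l //.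
  rewrite mulrCA ltr_pdivrMl //.
  by move: ratio_lt; rewrite ltr_pdivrMr // mulrAC ltr_pdivlMr.
by move: (e_opt e' e'_feas); rewrite leNgt cheaper.
Qed.

End BestResponse.

Lemma norm2_on_supported (R : realType) (d : nat) (D : {set 'I_d}) (e : 'cV[R]_d) :
  (forall f, f \notin D -> e f 0 = 0) -> norm2_on D e = norm2 e.
Proof.
move=> e_supp; rewrite /norm2_on /norm2 (bigID (mem D) predT) /=.
by rewrite [X in _ + X]big1 ?addr0 // => f /e_supp ->; rewrite expr0n.
Qed.

Lemma beta_desirable_supported (R : realType) (d : nat) (D : {set 'I_d})
    (beta : R) (e : 'cV[R]_d) :
  beta <= 1 -> (forall f, f \notin D -> e f 0 = 0) -> beta_desirable D beta e.
Proof.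
by move=> beta_le1 e_supp; rewrite /beta_desirable norm2_on_supported // ler_piMl ?sqrtr_ge0.
Qed.

Theorem theorem1 (R : realType) (d : nat) (D : {set 'I_d})
    (c : 'cV[R]_d) (A : 'M[R]_d) (h0 : 'cV[R]_d) (alpha : R) :
  (1 <= d)%N ->
  (forall f, 0 < c f 0) ->
  is_causal_graph A ->
  (forall f, 0 <= (contribution A *m h0) f 0) ->
  0 < alpha ->
  (exists2 fs, fs \in D &
     forall f, f \in ~: D ->
       (contribution A *m h0) f 0 / c f 0 < (contribution A *m h0) fs 0 / c fs 0) ->
  forall e : 'cV[R]_d, best_response c (contribution A *m h0) alpha e ->
  forall beta : R, 0 < beta -> beta <= 1 -> beta_desirable D beta e.
Proof.
move=> _ c_gt0 _ w_ge0 _ [fs _ fs_best] e e_best beta _ beta_le1.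
apply: beta_desirable_supported => // g gU.
by apply: best_response_dominated_eq0 e_best (w_ge0 g) (fs_best g _); rewrite ?in_setC.
Qed.
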